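(* Let $n\ge 1$, $d_1,\dots,d_n\ge 1$, $L_i\in\mathbb{C}^{d_i\times d_i}$ ($i=1,\dots,n$) and $C_{i,i-1}\in\mathbb{C}^{d_i\times d_{i-1}}$ ($i=2,\dots,n$). Assume: (i) each $L_i$ is invertible and diagonalizable, $L_iV_i=V_i\Lambda_i$ with $V_i$ invertible and $\Lambda_i=\mathrm{diag}(\lambda_{i,1},\dots,\lambda_{i,d_i})$; (ii) $\sigma(L_i)\cap\sigma(L_j)=\emptyset$ for all $i\neq j$; (iii) $\|L_1\|<\|L_2\|<\cdots<\|L_n\|\le 1$. Let $\mathsf{NonLin}$ be the nonlinear chained cascade map $\mathsf{NonLin}(x_1,\dots,x_n)=(L_1x_1+N_1(x_1),\;L_2x_2+C_{2,1}x_1+N_2(x_1,x_2),\;\dots,\;L_nx_n+C_{n,n-1}x_{n-1}+N_n(x_{n-1},x_n))$ for some maps $N_1:\mathbb{C}^{d_1}\to\mathbb{C}^{d_1}$, $N_i:\mathbb{C}^{d_{i-1}}\times\mathbb{C}^{d_i}\to\mathbb{C}^{d_i}$, and let $\tau:\mathbb{C}^{d_1}\times\cdots\times\mathbb{C}^{d_n}\to\mathbb{C}^{d_1}\times\cdots\times\mathbb{C}^{d_n}$ be a topological conjugacy (homeomorphism) with $\mathsf{Lin}=\tau^{-1}\circ\mathsf{NonLin}\circ\tau$. Then for every $y\in\mathbb{C}^{d_1}\times\cdots\times\mathbb{C}^{d_n}$, $$\lim_{t\to\infty}\Big\|\mathsf{NonLin}^{\circ t}(y)-(\tau\circ\mathsf{Nom}\circ\tau^{-1})^{\circ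 t}\big((\tau\circ\mathsf{pert}\circ\tau^{-1})(y)\big)\Big\|_\times=0.$$
   Context: Each $\mathbb{C}^{d_i}$ carries a fixed norm $\|\cdot\|$, matrices carry the induced operator norm, and $\|(x_1,\dots,x_n)\|_\times=\sum_i\|x_i\|$. $\mathsf{Lin}(x_1,\dots,x_n)=(L_1x_1,\;L_2x_2+C_{2,1}x_1,\;\dots,\;L_nx_n+C_{n,n-1}x_{n-1})$, $\mathsf{Nom}(x_1,\dots,x_n)=(L_1x_1,\dots,L_nx_n)$, and $\mathsf{F}^{\circ t}$ is the $t$-fold iterate. Matrices $D_{i,j}$ ($1\le j\le i\le n$) are defined recursively in $i$: $D_{i,i}=I_{d_i}$; for $i\ge 2$, $1\le j\le i-1$, $[\tilde C_{i,j}]_{\ell,m}=[V_i^{-1}C_{i,i-1}D_{i-1,j}V_j]_{\ell,m}(1-\lambda_{j,m}/\lambda_{i,\ell})^{-1}$ and $D_{i,j}=L_i^{-1}V_i\tilde C_{i,j}V_j^{-1}$. Define $\mathsf{pert}_1(x_1)=x_1$, $\mathsf{pert}_i(x_1,\dots,x_i)=x_i+\sum_{j=1}^{i-1}(-1)^{i-1-j}D_{i,j}\mathsf{pert}_j(x_1,\dots,x_j)$ for $i\ge2$, and $\mathsf{pert}(x)=(\mathsf{pert}_1(x_1),\dots,\mathsf{pert}_n(x_1,\dots,x_n))$. *)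

From HB Require Import structures.
From mathcomp Require Import all_boot all_order all_algebra.
From mathcomp Require Import complex.
From mathcomp Require Import all_classical all_reals all_analysis.

Unset Printing Implicit Defensive.

Import Order.TTheory GRing.Theory Num.Theory.
Local Open Scope ring_scope.
Local Open Scope classical_set_scope.

(* Blocks are indexed 0-based: block k (k < n) corresponds to block k+1 of the paper.
   [Cc k : 'M_(d k.+1, d k)] is the paper's C_{k+2,k+1}. *)

Section Defs.
Variable R : realType.
Local Notation C := (R[i])%type.

Definition is_norm (m : nat) (nrm : 'cV[C]_m -> R) : Prop :=
  [/\ forall x, 0 <= nrm x,
      forall x, nrm x = 0 -> x = 0,
      forall (a : C) x, real_complex R (nrm (a *: x)) = `|a| * real_complex R (nrm x)
    & forall x y, nrm (x + y) <= nrm x + nrm y].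

Definition opnorm (m p : nat) (nm : 'cV[C]_m -> R) (np : 'cV[C]_p -> R)
  (A : 'M[C]_(p, m)) : R :=
  sup [set np (A *m x) / nm x | x in [set x : 'cV[C]_m | x != 0]].

Variables (n : nat) (d : nat -> nat).

Definition state := forall i : 'I_n, 'cV[C]_(d i).

Definition normx (nrm : forall i : nat, 'cV[C]_(d i) -> R) (x : state) : R :=
  \sum_(i < n) nrm i (x i).

Definition subs (x y : state) : state := fun i => x i - y i.

Definition scontinuous (nrm : forall i : nat, 'cV[C]_(d i) -> R)
  (f : state -> state) : Prop :=
  forall x (e : R), 0 < e -> exists2 del : R, 0 < del &
    forall z, normx nrm (subs z x) < del -> normx nrm (subs (f z) (f x)) < e.

Definition ext (x : state) (i : nat) : 'cV[C]_(d i) :=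
  (match (i < n)%N as b return (i < n)%N = b -> 'cV[C]_(d i) with
   | true => fun h => x (Ordinal h)
   | false => fun _ => 0
   end) erefl.

Definition restr (f : forall i : nat, 'cV[C]_(d i)) : state := fun i => f (val i).

Variables (L : forall i : nat, 'M[C]_(d i)) (Cc : forall k : nat, 'M[C]_(d k.+1, d k)).

Definition Lin (x : state) : state :=
  restr (fun i => L i *m ext x i +
    match i as i0 return 'cV[C]_(d i0) with
    | 0 => 0
    | k.+1 => Cc k *m ext x k
    end).

Definition Nom (x : state) : state := fun i => L i *m x i.

Definition NonLin (N1 : 'cV[C]_(d 0%N) -> 'cV[C]_(d 0%N))
  (N : forall k : nat, 'cV[C]_(d k) -> 'cV[C]_(d k.+1) -> 'cV[C]_(d k.+1))
  (x : state) : state :=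
  restr (fun i => L i *m ext x i +
    match i as i0 return 'cV[C]_(d i0) with
    | 0 => N1 (ext x 0%N)
    | k.+1 => Cc k *m ext x k + N k (ext x k) (ext x k.+1)
    end).

Variables (V : forall i : nat, 'M[C]_(d i)) (lam : forall i : nat, 'I_(d i) -> C).

Definition idlike (i j : nat) : 'M[C]_(d i, d j) :=
  \matrix_(a < d i, b < d j) ((a : nat) == b)%:R.

(* D i j (j <= i): D_{i,i} = I, and for j < i the recursive definition;
   values for j > i are irrelevant (set to 0). *)
Fixpoint Dm (i j : nat) {struct i} : 'M[C]_(d i, d j) :=
  match i as i0 return 'M[C]_(d i0, d j) with
  | 0 => idlike 0%N j
  | k.+1 =>
      if j == k.+1 then idlike k.+1 j
      else if (j <= k)%N then
        let M := invmx (V k.+1) *m Cc k *m Dm k j *m V j in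
        let Ct := \matrix_(l < d k.+1, m < d j)
                    (M l m * (1 - lam j m / lam k.+1 l)^-1) in
        invmx (L k.+1) *m V k.+1 *m Ct *m invmx (V j)
      else 0
  end.

(* pertP x k j = pert_j(x) for j <= k *)
Fixpoint pertP (x : forall i : nat, 'cV[C]_(d i)) (k : nat) :
    forall j : nat, 'cV[C]_(d j) :=
  match k with
  | 0 => fun j => x j
  | k'.+1 => fun j =>
      if j == k'.+1 then
        x j + \sum_(j' < k'.+1) ((-1) ^+ (k' - j')%N *: (Dm j j' *m pertP x k' j'))
      else pertP x k' j
  end.

Definition pert (x : state) : state := restr (fun i => pertP (ext x) i i).

End Defs.

From Pilot Require Import Defs.
From HB Require Import structures.
From mathcomp Require Import all_boot all_order all_algebra.
From mathcomp Require Import complex.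
From mathcomp Require Import all_classical all_reals all_analysis.
From mathcomp Require Import ring zify.
Import Order.TTheory GRing.Theory Num.Theory numFieldNormedType.Exports.
Import Normc.
Local Open Scope ring_scope.
Local Open Scope classical_set_scope.

(* Every D_{i+1,j} solves the Sylvester equation L_{i+1} D - D L_j = C_{i+1,i} D_{i,j},
   which is solvable entrywise in the eigenbases of L_{i+1} and L_j because their
   spectra are disjoint.  This makes pert conjugate Lin to the block-diagonal Nom, so with
   x = tau^-1 y both iterates in the statement are images under tau of Lin^t x and
   Nom^t (pert x) = pert (Lin^t x).  Block i of Lin^t x - pert (Lin^t x) is a combination
   of the L_j^t pert_j x with j < i, which vanishes because ||L_j|| < ||L_n|| <= 1.
   Finally Nom^t (pert x) stays bounded, so by Bolzano-Weierstrass every subsequence of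
   times has a further one along which both orbits converge to a common limit q, and the
   continuity of tau at q carries the vanishing distance through tau. *)

Section Subsequences.

Lemma increasing_seq_ge {phi : nat -> nat} : increasing_seq phi -> forall k, (k <= phi k)%N.
Proof.
move=> /increasing_seqP phi_incr; elim=> // k IHk.
exact: leq_ltn_trans IHk (phi_incr k).
Qed.

Lemma increasing_seq_comp {phi psi : nat -> nat} :
  increasing_seq phi -> increasing_seq psi -> increasing_seq (phi \o psi).
Proof. by move=> phi_incr psi_incr a b /=; rewrite phi_incr; exact: psi_incr. Qed.

Context {T : topologicalType}.

Lemma cvg_subseq {u : nat -> T} {phi : nat -> nat} {l : T} :
  increasing_seq phi -> u @ \oo --> l -> u (phi k) @[k --> \oo] --> l.
Proof.
move=> phi_incr; apply: cvg_comp; apply/cvgnyPge => N.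
near=> k; rewrite (leq_trans _ (increasing_seq_ge phi_incr k)) //.
by near: k; exact: nbhs_infty_ge.
Unshelve. all: by end_near. Qed.

Lemma cvg_subsubseq (u : nat -> T) (l : T) :
  (forall phi, increasing_seq phi ->
     exists2 psi, increasing_seq psi & u (phi (psi k)) @[k --> \oo] --> l) ->
  u @ \oo --> l.
Proof.
move=> subsub A lA /=; apply: contrapT => not_evA.
have often_notA N : exists k, (N <= k)%N /\ ~ A (u k).
  apply: contrapT => never; apply: not_evA; exists N => // k /= Nk.
  by apply: contrapT => nAk; apply: never; exists k.
have [g gP] := choice often_notA.
pose fix phi k := if k is k'.+1 then g (phi k').+1 else g 0%N.
have phi_incr : increasing_seq phi.
  by apply/increasing_seqP => k; have [] := gP (phi k).+1.
have notA_phi k : ~ A (u (phi k)).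
  by case: k => [|k]; [case: (gP 0%N) | case: (gP (phi k).+1)].
have [psi psi_incr /(_ A lA) [N _ evA]] := subsub phi phi_incr.
exact: notA_phi (psi N) (evA N (leqnn N)).
Qed.

End Subsequences.

Section RealSequences.
Context {R : realType}.
Implicit Types u v : nat -> R.

Lemma cvg_dist0 u (l : R) : u @ \oo --> l -> `|u k - l| @[k --> \oo] --> 0.
Proof.
by move=> ul; have := cvg_norm (cvgB ul (cvg_cst l)); rewrite subrr normr0; apply.
Qed.

Lemma cvg0_le {u v} : (forall k, 0 <= u k <= v k) ->
  v @ \oo --> 0 -> u @ \oo --> 0.
Proof.
by move=> uv; apply: (squeeze_cvgr _ (cvg_cst 0)); near=> k; apply: uv.
Unshelve. all: by end_near. Qed.

Lemma cvg0_sum {I : Type} (s : seq I) (u : I -> nat -> R) :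
  (forall i, u i @ \oo --> 0) -> (fun k => \sum_(i <- s) u i k) @ \oo --> 0.
Proof.
move=> u0; elim: s => [|i s IHs].
  by under eq_cvg do rewrite big_nil; exact: cvg_cst.
under eq_cvg do rewrite big_cons.
by have := cvgD (u0 i) IHs; rewrite addr0; apply.
Qed.

Lemma cvg0_scale (c : R) {u} : u @ \oo --> 0 -> (fun k => c * u k) @ \oo --> 0.
Proof. by move=> u0; rewrite -(mulr0 c); apply: cvgMr. Qed.

Lemma bolzano_weierstrass_fin {I : finType} {u : I -> nat -> R} {B : I -> R} :
  (forall i k, `|u i k| <= B i) ->
  exists2 phi, increasing_seq phi & forall i, cvgn (u i \o phi).
Proof.
move=> uB.
suff [phi phi_incr cvg_phi] : exists2 phi, increasing_seq phi &
    forall i, i \in enum I -> cvgn (u i \o phi).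
  by exists phi => // i; apply: cvg_phi; rewrite mem_enum.
elim: (enum I) => [|i s [phi phi_incr cvg_phi]]; first by exists id.
have bnd : bounded_fun (u i \o phi).
  exists (B i); split; rewrite ?num_real // => x Bx k _.
  exact: le_trans (uB _ _) (ltW Bx).
have [psi psi_incr cvg_psi] := bolzano_weierstrass bnd.
exists (phi \o psi); first exact: increasing_seq_comp.
move=> j; rewrite in_cons => /predU1P [-> //| js].
by apply/cvg_ex; eexists; apply: cvg_subseq psi_incr (cvg_phi j js).
Qed.

End RealSequences.

Section ComplexModulus.
Context {R : realType}.
Implicit Types z : R[i].
Local Open Scope complex_scope.

Lemma normr_normc z : `|z| = (normc z)%:C.
Proof. by rewrite normc_def; case: z. Qed.

Lemma normc_ge0 z : 0 <= normc z.
Proof. by case: z => a b; exact: sqrtr_ge0. Qed.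

Lemma normc_real (r : R) : normc r%:C = `|r|.
Proof. by rewrite /normc /= expr0n addr0 sqrtr_sqr. Qed.

Lemma normc_sign k : normc ((-1) ^+ k : R[i]) = 1.
Proof. by apply: (@complexI R); rewrite -normr_normc normrX normrN1 expr1n. Qed.

Lemma normc_sum (I : Type) (s : seq I) (f : I -> R[i]) :
  normc (\sum_(i <- s) f i) <= \sum_(i <- s) normc (f i).
Proof.
elim: s => [|i s IHs]; first by rewrite !big_nil normc0.
by rewrite !big_cons (le_trans (le_normcD _ _)) // lerD2l.
Qed.

Lemma Re_le_normc z : `|complex.Re z| <= normc z.
Proof.
case: z => a b /=; rewrite -sqrtr_sqr ler_sqrt ?addr_ge0 ?sqr_ge0 //.
by rewrite lerDl sqr_ge0.
Qed.

Lemma Im_le_normc z : `|complex.Im z| <= normc z.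
Proof.
case: z => a b /=; rewrite -sqrtr_sqr ler_sqrt ?addr_ge0 ?sqr_ge0 //.
by rewrite lerDr sqr_ge0.
Qed.

Lemma normcB_le_ReIm z w :
  normc (z - w) <= `|complex.Re z - complex.Re w| + `|complex.Im z - complex.Im w|.
Proof.
case: z w => a b [c e] /=; move: (a - c) (b - e) => {}a {}b.
rewrite -[leRHS]ger0_norm ?addr_ge0 // -sqrtr_sqr.
rewrite ler_sqrt ?sqr_ge0 // sqrrD !real_normK ?num_real // -addrA lerD2l lerDr.
by rewrite mulrn_wge0 ?mulr_ge0.
Qed.

End ComplexModulus.

Section VectorBolzanoWeierstrass.
Context {R : realType}.
Local Notation C := R[i].

Definition l1norm {m} (x : 'cV[C]_m) : R := \sum_r normc (x r 0).

Lemma l1norm_ge0 {m} (x : 'cV[C]_m) : 0 <= l1norm x.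
Proof. by apply: sumr_ge0 => r _; exact: normc_ge0. Qed.

Lemma normc_le_l1norm {m} (x : 'cV[C]_m) r : normc (x r 0) <= l1norm x.
Proof.
by rewrite /l1norm (bigD1 r) //= lerDl; apply: sumr_ge0 => i _; exact: normc_ge0.
Qed.

Lemma l1normZ {m} (a : C) (x : 'cV[C]_m) : l1norm (a *: x) = normc a * l1norm x.
Proof. by rewrite /l1norm mulr_sumr; apply: eq_bigr => r _; rewrite mxE normcM. Qed.

Lemma l1norm_mulmx_le {p m} (A : 'M[C]_(p, m)) (x : 'cV[C]_m) :
  l1norm (A *m x) <= (\sum_r \sum_c normc (A r c)) * l1norm x.
Proof.
rewrite /l1norm mulr_suml; apply: ler_sum => r _; rewrite mxE.
apply: le_trans (normc_sum _ _ _) _; rewrite mulr_suml; apply: ler_sum => c _.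
by rewrite normcM ler_wpM2l ?normc_ge0 ?normc_le_l1norm.
Qed.

Lemma l1norm_cvg0 {m} (u : nat -> 'cV[C]_m) (v : 'cV[C]_m) :
  (forall r, complex.Re (u k r 0) @[k --> \oo] --> complex.Re (v r 0)) ->
  (forall r, complex.Im (u k r 0) @[k --> \oo] --> complex.Im (v r 0)) ->
  l1norm (u k - v) @[k --> \oo] --> 0.
Proof.
move=> uRe uIm.
apply: (@cvg0_le _ _ (fun k => \sum_(r < m) (`|complex.Re (u k r 0) - complex.Re (v r 0)|
            + `|complex.Im (u k r 0) - complex.Im (v r 0)|))).
  move=> k; rewrite l1norm_ge0 /=; apply: ler_sum => r _; rewrite !mxE.
  exact: normcB_le_ReIm.
apply: cvg0_sum => r.
by rewrite -[0 : R]addr0; apply: cvgD; exact: cvg_dist0.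
Qed.

Lemma bolzano_weierstrass_cV {I : finType} {m : I -> nat}
    {u : forall i, nat -> 'cV[C]_(m i)} :
  (forall i, exists B, forall k, l1norm (u i k) <= B) ->
  exists2 phi, increasing_seq phi & exists v : forall i, 'cV[C]_(m i),
    forall i, l1norm (u i (phi k) - v i) @[k --> \oo] --> 0.
Proof.
move=> /choice [B uB].
pose part (c : {i : I & 'I_(m i)} * bool) k :=
  let z := u (tag c.1) k (tagged c.1) 0 in
  if c.2 then complex.Im z else complex.Re z.
have partB c k : `|part c k| <= B (tag c.1).
  apply: le_trans (le_trans (normc_le_l1norm _ (tagged c.1)) (uB _ k)).
  by rewrite /part; case: c.2; [exact: Im_le_normc | exact: Re_le_normc].
have [phi phi_incr cvg_part] := bolzano_weierstrass_fin partB.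
pose l c := limn (part c \o phi).
exists phi => //; exists (fun i => \col_r (l (Tagged _ r, false) +i* l (Tagged _ r, true))%C).
by move=> i; apply: l1norm_cvg0 => r; rewrite mxE; exact: (cvg_part (Tagged _ r, _)).
Qed.

End VectorBolzanoWeierstrass.

Section Norms.
Context {R : realType} {m : nat} {nm : 'cV[R[i]]_m -> R}.
Hypothesis nm_norm : is_norm R m nm.

Lemma nm_ge0 x : 0 <= nm x. Proof. by case: nm_norm. Qed.

Lemma nm_eq0 x : nm x = 0 -> x = 0. Proof. by case: nm_norm => _ + _ _; apply. Qed.

Lemma nmD x y : nm (x + y) <= nm x + nm y. Proof. by case: nm_norm. Qed.

Lemma nmZ a x : nm (a *: x) = normc a * nm x.
Proof.
by case: nm_norm => _ _ nmZ _; apply: (@complexI R); rewrite nmZ rmorphM /= normr_normc.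
Qed.

Lemma nm0 : nm 0 = 0.
Proof. by rewrite -(scale0r (0 : 'cV_m)) nmZ normc0 mul0r. Qed.

Lemma nmN x : nm (- x) = nm x.
Proof. by rewrite -scaleN1r nmZ -(expr1 (-1)) normc_sign mul1r. Qed.

Lemma nmB x y : nm (x - y) = nm (y - x).
Proof. by rewrite -nmN opprB. Qed.

Lemma nm_gt0 x : x != 0 -> 0 < nm x.
Proof. by move=> x0; rewrite lt_def nm_ge0 andbT; apply: contra_neq x0; exact: nm_eq0. Qed.

Lemma nm_sum (I : Type) (s : seq I) (f : I -> 'cV_m) :
  nm (\sum_(i <- s) f i) <= \sum_(i <- s) nm (f i).
Proof.
elim: s => [|i s IHs]; first by rewrite !big_nil nm0.
by rewrite !big_cons (le_trans (nmD _ _)) // lerD2l.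
Qed.

Lemma nm_le_l1norm : exists2 K, 0 <= K & forall x, nm x <= K * l1norm x.
Proof.
exists (\sum_r nm (delta_mx r 0)) => [|x]; first by apply: sumr_ge0 => r _; exact: nm_ge0.
have x_expand : x = \sum_r x r 0 *: delta_mx r 0.
  apply/matrixP => i j; rewrite summxE (bigD1 i) //= !mxE ord1 !eqxx mulr1.
  by rewrite big1 ?addr0 // => k /negbTE ki; rewrite !mxE eq_sym ki mulr0.
rewrite {1}x_expand; apply: le_trans (nm_sum _ _ _) _.
rewrite mulr_suml; apply: ler_sum => r _; rewrite nmZ mulrC.
by apply: ler_wpM2l; [exact: nm_ge0 | exact: normc_le_l1norm].
Qed.

Lemma nm_cvg0 (u : nat -> 'cV_m) :
  l1norm (u k) @[k --> \oo] --> 0 -> nm (u k) @[k --> \oo] --> 0.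
Proof.
have [K _ nm_le] := nm_le_l1norm.
by move=> /(cvg0_scale K); apply: cvg0_le => k; rewrite nm_ge0 nm_le.
Qed.

(* Otherwise there are l1norm-unit vectors y k with nm (y k) -> 0; a cluster point of
   them would have l1norm equal to 1 and nm equal to 0. *)
Lemma l1norm_le_nm : exists2 c, 0 < c & forall x, c * l1norm x <= nm x.
Proof.
have [//|no_c] := pselect (exists2 c, 0 < c & forall x, c * l1norm x <= nm x).
have small k : exists y, l1norm y = 1 /\ nm y < harmonic k.
  have : ~ forall x, harmonic k * l1norm x <= nm x.
    by move=> hk; apply: no_c; exists (harmonic k); first exact: harmonic_gt0.
  move=> /existsNP [x /negP]; rewrite -ltNge => nm_small.
  have x_pos : 0 < l1norm x.
    rewrite lt_def l1norm_ge0 andbT; apply: contraTneq nm_small => ->.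
    by rewrite mulr0 -leNgt nm_ge0.
  exists ((l1norm x)^-1%:C%C *: x).
  rewrite l1normZ nmZ normc_real ger0_norm ?invr_ge0 ?ltW // mulVf ?gt_eqF //.
  by split => //; rewrite ltr_pdivrMl // mulrC.
have [y yP] := choice small.
have y_le1 (_ : unit) : exists B, forall k, l1norm (y k) <= B.
  by exists 1 => k; rewrite (proj1 (yP k)).
have [phi phi_incr [v yv]] := bolzano_weierstrass_cV y_le1.
have [K _ nm_le] := nm_le_l1norm.
have v0 : v tt = 0.
  apply: nm_eq0; apply/le_anti; rewrite nm_ge0 andbT.
  have bound k : nm (v tt) <= harmonic (phi k) + K * l1norm (y (phi k) - v tt).
    rewrite -{1}[v tt](subrKC (y (phi k))) (le_trans (nmD _ _)) // lerD //.
      exact: ltW (proj2 (yP _)).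
    by rewrite nmB nm_le.
  have bound0 : (fun k => harmonic (phi k) + K * l1norm (y (phi k) - v tt)) @ \oo --> 0.
    rewrite -[0 : R]addr0; apply: cvgD; first exact: cvg_subseq phi_incr cvg_harmonic.
    by apply: cvg0_scale; exact: yv.
  by apply: (ler_cvg_to (cvg_cst _) bound0); near=> k; exact: bound.
have : 1 <= 0 :> R.
  apply: (ler_cvg_to (cvg_cst _) (yv tt)); near=> k.
  by rewrite v0 subr0 (proj1 (yP _)).
by rewrite ler10.
Unshelve. all: by end_near. Qed.
End Norms.

Section OperatorNorm.
Context {R : realType} {m p : nat} {nm : 'cV[R[i]]_m -> R} {np : 'cV[R[i]]_p -> R}.
Hypotheses (nm_norm : is_norm R m nm) (np_norm : is_norm R p np).
Variable A : 'M[R[i]]_(p, m).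

Lemma mulmx_nm_bounded : exists K, forall x, np (A *m x) <= K * nm x.
Proof.
have [Kp Kp_ge0 np_le] := nm_le_l1norm np_norm.
have [c c_gt0 nm_ge] := l1norm_le_nm nm_norm.
exists (Kp * (\sum_r \sum_j normc (A r j)) / c) => x.
apply: le_trans (np_le _) _; rewrite -mulrA -mulrA ler_wpM2l //.
apply: le_trans (l1norm_mulmx_le _ _) _; rewrite -mulrA ler_wpM2l //.
  by apply: sumr_ge0 => r _; apply: sumr_ge0 => j _; exact: normc_ge0.
by rewrite ler_pdivlMl // mulrC nm_ge.
Qed.

Lemma opnorm_le x : np (A *m x) <= opnorm R m p nm np A * nm x.
Proof.
have [->|x0] := eqVneq x 0; first by rewrite mulmx0 !nm0 // mulr0.
have [K nmK] := mulmx_nm_bounded.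
have ub : has_ubound [set np (A *m x) / nm x | x in [set x | x != 0]].
  by exists K => _ [z z0 <-]; rewrite ler_pdivrMr ?nmK ?nm_gt0.
by rewrite -ler_pdivrMr ?nm_gt0 //; apply: (ub_le_sup ub); exists x.
Qed.

Lemma opnorm_ge0 : (0 < m)%N -> 0 <= opnorm R m p nm np A.
Proof.
move=> m_gt0; pose e : 'cV[R[i]]_m := delta_mx (Ordinal m_gt0) 0.
have e0 : e != 0.
  apply/negP => /eqP/matrixP/(_ (Ordinal m_gt0) 0).
  by rewrite !mxE !eqxx => /eqP; rewrite oner_eq0.
by have := le_trans (nm_ge0 np_norm _) (opnorm_le e); rewrite pmulr_lge0 ?nm_gt0.
Qed.

End OperatorNorm.

Section Sylvester.
Context {F : fieldType} {p m : nat}.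
Variables (Li Vi : 'M[F]_p) (Lj Vj : 'M[F]_m) (li : 'I_p -> F) (lj : 'I_m -> F).
Hypotheses (Li_unit : Li \in unitmx) (Vi_unit : Vi \in unitmx) (Vj_unit : Vj \in unitmx).
Hypotheses (LVi : Li *m Vi = Vi *m diag_mx (\row_k li k))
  (LVj : Lj *m Vj = Vj *m diag_mx (\row_k lj k)).
Hypotheses (li_neq0 : forall l, li l != 0) (lij_neq : forall l c, lj c != li l).

Lemma sylvester_diag (B X : 'M[F]_(p, m)) :
  X = invmx Li *m Vi *m
        \matrix_(l, c) ((invmx Vi *m B *m Vj) l c * (1 - lj c / li l)^-1) *m invmx Vj ->
  Li *m X - X *m Lj = B.
Proof.
set Ct := \matrix_(l, c) _ => ->; set Di := diag_mx (\row_k li k); set Dj := diag_mx (\row_k lj k).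
have VjLj : invmx Vj *m Lj = Dj *m invmx Vj.
  by rewrite -[Lj](mulmxK Vj_unit) LVj !mulmxA mulVmx ?mul1mx.
have LiVi : invmx Li *m Vi *m Di = Vi.
  by rewrite -mulmxA -LVi mulmxA mulVmx ?mul1mx.
have DiCt : Di *m Ct - Ct *m Dj = Di *m (invmx Vi *m B *m Vj).
  apply/matrixP => l c; rewrite !mul_diag_mx mul_mx_diag !mxE.
  have li0 := li_neq0 l; have lijB : li l - lj c != 0 by rewrite subr_eq0 eq_sym.
  by rewrite -[1](divff li0) -mulrBl invf_div; field.
have -> : Li *m (invmx Li *m Vi *m Ct *m invmx Vj) = invmx Li *m Vi *m Di *m Ct *m invmx Vj.
  by rewrite LiVi !mulmxA mulmxV ?mul1mx.
rewrite -[X in _ - X]mulmxA VjLj.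
have -> : invmx Li *m Vi *m Di *m Ct *m invmx Vj
    - invmx Li *m Vi *m Ct *m (Dj *m invmx Vj)
    = invmx Li *m Vi *m (Di *m Ct - Ct *m Dj) *m invmx Vj.
  by rewrite mulmxBr mulmxBl !mulmxA.
by rewrite DiCt !mulmxA LiVi mulmxV // mul1mx mulmxK.
Qed.

End Sylvester.

Section StateNorm.
Context {R : realType} {n : nat} {d : nat -> nat} {nrm : forall i, 'cV[R[i]]_(d i) -> R}.
Hypothesis nrm_norm : forall i, (i < n)%N -> is_norm R (d i) (nrm i).
Local Notation state := (state R n d).
Local Notation normx := (normx R n d nrm).
Local Notation subs := (subs R n d).

Lemma normx_ge0 x : 0 <= normx x.
Proof. by apply: sumr_ge0 => i _; exact: nm_ge0 (nrm_norm _ (ltn_ord i)) _. Qed.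

Lemma normx_subsC x y : normx (subs x y) = normx (subs y x).
Proof. by apply: eq_bigr => i _; exact: nmB (nrm_norm _ (ltn_ord i)) _ _. Qed.

Lemma normx_subs_triangle x y z : normx (subs x z) <= normx (subs x y) + normx (subs y z).
Proof.
rewrite -big_split /=; apply: ler_sum => i _.
rewrite /Defs.subs; have -> : x i - z i = (x i - y i) + (y i - z i) by rewrite addrA subrK.
exact: nmD (nrm_norm _ (ltn_ord i)) _ _.
Qed.

Lemma normx_subs_cvg0_trans {a b c : nat -> state} :
  normx (subs (a k) (b k)) @[k --> \oo] --> 0 ->
  normx (subs (b k) (c k)) @[k --> \oo] --> 0 ->
  normx (subs (a k) (c k)) @[k --> \oo] --> 0.
Proof.
move=> ab bc.
apply: (cvg0_le (v := fun k => normx (subs (a k) (b k)) + normx (subs (b k) (c k)))).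
  by move=> k; rewrite normx_ge0 normx_subs_triangle.
by have := cvgD ab bc; rewrite addr0; apply.
Qed.

Lemma scontinuous_cvg {f : state -> state} {s : nat -> state} {q : state} :
  scontinuous R n d nrm f -> normx (subs (s k) q) @[k --> \oo] --> 0 ->
  normx (subs (f (s k)) (f q)) @[k --> \oo] --> 0.
Proof.
move=> f_cont /cvgrPdist_lt sq; apply/cvgrPdist_lt => e e_gt0.
have [del del_gt0 f_del] := f_cont q e e_gt0.
apply: filterS (sq del del_gt0) => k.
by rewrite !sub0r !normrN !ger0_norm ?normx_ge0 //; exact: f_del.
Qed.

End StateNorm.

Section Cascade.
Context {R : realType} {n : nat} {d : nat -> nat}.
Local Notation C := R[i].
Context {L : forall i, 'M[C]_(d i)} {Cc : forall k, 'M[C]_(d k.+1, d k)}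
  {V : forall i, 'M[C]_(d i)} {lam : forall i, 'I_(d i) -> C}.
Local Notation state := (state R n d).
Local Notation ext := (ext R n d).
Local Notation Lin := (Lin R n d L Cc).
Local Notation Nom := (Nom R n d L).
Local Notation Dm := (Dm R d L Cc V lam).
Local Notation pertP := (pertP R d L Cc V lam).
Local Notation pert := (pert R n d L Cc V lam).

Lemma extE (x : state) {i} (i_lt : (i < n)%N) : ext x i = x (Ordinal i_lt).
Proof.
rewrite /ext; move: (erefl (i < n)%N); rewrite {2 3}i_lt => e.
by rewrite (bool_irrelevance e i_lt).
Qed.

Lemma ext_restr (f : forall i, 'cV[C]_(d i)) i : (i < n)%N -> ext (restr R n d f) i = f i.
Proof. by move=> i_lt; rewrite (extE _ i_lt). Qed.

Lemma Dm_id k : Dm k k = 1%:M.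
Proof. by case: k => [|k] /=; rewrite ?eqxx; apply/matrixP => a b; rewrite !mxE. Qed.

Lemma DmS k j : (j <= k)%N -> Dm k.+1 j =
  invmx (L k.+1) *m V k.+1 *m
    \matrix_(l, c) ((invmx (V k.+1) *m Cc k *m Dm k j *m V j) l c
                    * (1 - lam j c / lam k.+1 l)^-1) *m invmx (V j).
Proof. by move=> jk /=; rewrite ltn_eqF ?ltnS // jk. Qed.

Lemma pertE (z : state) (i : 'I_n) : pert z i = pertP (ext z) i i.
Proof. by []. Qed.

Lemma pertP_le x k j : (j <= k)%N -> pertP x k j = pertP x j j.
Proof.
elim: k => [|k IHk]; first by rewrite leqn0 => /eqP ->.
by rewrite leq_eqVlt => /predU1P [-> //|jk] /=; rewrite ltn_eqF // IHk.
Qed.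

Lemma pertPS x k : pertP x k.+1 k.+1 =
  x k.+1 + \sum_(j < k.+1) (-1) ^+ (k - j) *: (Dm k.+1 j *m pertP x j j).
Proof.
rewrite /= eqxx; congr (_ + _); apply: eq_bigr => j _.
by rewrite pertP_le // -ltnS.
Qed.

Lemma pertP_inv x k : x k = \sum_(j < k.+1) (-1) ^+ (k - j) *: (Dm k j *m pertP x j j).
Proof.
rewrite big_ord_recr /= subnn expr0 scale1r Dm_id mul1mx.
case: k => [|k]; first by rewrite big_ord0 add0r.
rewrite pertPS addrCA -big_split big1 ?addr0 // => j _.
by rewrite subSn -1?ltnS // exprS mulN1r scaleNr; exact: addNr.
Qed.

Hypotheses (L_unit : forall i, (i < n)%N -> L i \in unitmx)
  (V_unit : forall i, (i < n)%N -> V i \in unitmx)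
  (LV : forall i, (i < n)%N -> L i *m V i = V i *m diag_mx (\row_k lam i k))
  (spectra_disjoint : forall i j, (i < n)%N -> (j < n)%N -> i <> j ->
     forall a : C, ~ (eigenvalue (L i) a /\ eigenvalue (L j) a)).

Lemma eigenvalue_lam {i} (i_lt : (i < n)%N) l : eigenvalue (L i) (lam i l).
Proof.
apply/eigenvalueP; exists (row l (invmx (V i))); last first.
  apply/eqP => /(congr1 (mulmx^~ (V i))); rewrite mul0mx -row_mul mulVmx ?V_unit //.
  by move/rowP/(_ l); rewrite !mxE eqxx => /eqP; rewrite oner_eq0.
have VL : invmx (V i) *m L i = diag_mx (\row_k lam i k) *m invmx (V i).
  by rewrite -[L i](mulmxK (V_unit _ i_lt)) LV // !mulmxA mulVmx ?V_unit // mul1mx.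
by rewrite -row_mul VL mul_diag_mx; apply/rowP => c; rewrite !mxE.
Qed.

Lemma lam_neq0 {i} (i_lt : (i < n)%N) l : lam i l != 0.
Proof.
apply/eqP => lam0.
have /eigenvalueP [v] := eigenvalue_lam i_lt l; rewrite lam0 scale0r => vL0.
by apply/negP; rewrite negbK -[v](mulmxK (L_unit _ i_lt)) vL0 mul0mx.
Qed.

Lemma lam_neq i j l c : (i < n)%N -> (j < n)%N -> i <> j -> lam j c != lam i l.
Proof.
move=> i_lt j_lt ij; apply/eqP => e; apply: (spectra_disjoint _ _ i_lt j_lt ij (lam i l)).
by rewrite -{2}e; split; exact: eigenvalue_lam.
Qed.

Lemma Dm_sylvester k j : (k.+1 < n)%N -> (j <= k)%N ->
  L k.+1 *m Dm k.+1 j - Dm k.+1 j *m L j = Cc k *m Dm k j.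
Proof.
move=> k_lt jk; have j_lt : (j < n)%N by rewrite (leq_ltn_trans jk) // ltnW.
apply: (sylvester_diag (L k.+1) (V k.+1) (L j) (V j) (lam k.+1) (lam j)).
- exact: L_unit.
- exact: V_unit.
- exact: V_unit.
- exact: LV.
- exact: LV.
- exact: lam_neq0.
- by move=> l c; apply: lam_neq => // /eqP; rewrite gtn_eqF // ltnS.
- by rewrite (DmS _ _ jk) [invmx (V k.+1) *m (Cc k *m _)]mulmxA.
Qed.

Lemma ext_Lin z i : (i < n)%N -> ext (Lin z) i =
  L i *m ext z i + if i is k.+1 then Cc k *m ext z k else 0.
Proof. by move=> i_lt; rewrite ext_restr. Qed.

Lemma pertP_Lin z i : (i < n)%N -> pertP (ext (Lin z)) i i = L i *m pertP (ext z) i i.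
Proof.
elim/ltn_ind: i => -[|k] IH i_lt; first by rewrite /= ext_Lin // addr0.
rewrite !pertPS ext_Lin // mulmxDr -addrA; congr (_ + _).
under eq_bigr => j _ do rewrite IH ?(ltn_trans (ltn_ord j) i_lt) //.
rewrite {1}(pertP_inv (ext z) k) !mulmx_sumr.
apply/eqP; rewrite eq_sym -subr_eq -sumrB; apply/eqP; apply: eq_bigr => j _.
by rewrite !scalemxAr !mulmxA -mulmxBl (Dm_sylvester _ _ i_lt) // -ltnS.
Qed.

Lemma pert_Lin z : pert (Lin z) = Nom (pert z).
Proof.
apply: (@functional_extensionality_dep 'I_n) => i.
exact: pertP_Lin.
Qed.

Lemma pert_iter_Lin z t : pert (iter t Lin z) = iter t Nom (pert z).
Proof. by elim: t => //= t IHt; rewrite pert_Lin IHt. Qed.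

Context {nrm : forall i, 'cV[C]_(d i) -> R}.
Local Notation rho i := (opnorm R (d i) (d i) (nrm i) (nrm i) (L i)).
Local Notation normx := (normx R n d nrm).
Local Notation subs := (subs R n d).
Hypotheses (d_gt0 : forall i, (i < n)%N -> (0 < d i)%N)
  (nrm_norm : forall i, (i < n)%N -> is_norm R (d i) (nrm i))
  (rho_incr : forall k, (k.+1 < n)%N -> rho k < rho k.+1)
  (rho_last : rho n.-1 <= 1).

Lemma rho_ge0 i : (i < n)%N -> 0 <= rho i.
Proof. by move=> i_lt; apply: opnorm_ge0; auto. Qed.

Lemma rho_lt i j : (i < j < n)%N -> rho i < rho j.
Proof.
elim: j => // j IHj /andP [ij j_lt]; have [ij'|ji|->] := ltngtP i j.
- by apply: (lt_trans _ (rho_incr _ j_lt)); apply: IHj; lia.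
- by exfalso; lia.
- exact: rho_incr.
Qed.

Lemma rho_lt1 i : (i.+1 < n)%N -> rho i < 1.
Proof.
by move=> i_lt; apply: lt_le_trans rho_last; apply: rho_lt; lia.
Qed.

Lemma rho_le1 i : (i < n)%N -> rho i <= 1.
Proof.
move=> i_lt; have [/rho_lt1/ltW //|n_le] := ltnP i.+1 n.
by have -> : i = n.-1 by lia.
Qed.

Lemma nrm_iter_Nom p t (i : 'I_n) : nrm i (iter t Nom p i) <= rho i ^+ t * nrm i (p i).
Proof.
have nrm_i := nrm_norm _ (ltn_ord i).
elim: t => [|t IHt]; first by rewrite expr0 mul1r.
rewrite iterS exprS -mulrA; apply: le_trans (opnorm_le nrm_i nrm_i _ _) _.
by apply: ler_wpM2l IHt; exact: rho_ge0.
Qed.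

Lemma nrm_sub_pert_le (z : state) (i : 'I_n) :
  nrm i (z i - pert z i) <=
  \sum_(j < i) opnorm R (d j) (d i) (nrm j) (nrm i) (Dm i j) * nrm j (ext (pert z) j).
Proof.
have nrm_i := nrm_norm _ (ltn_ord i).
case: i nrm_i => -[|k] k_lt nrm_k; rewrite pertE.
  by rewrite /= (extE _ k_lt) subrr big_ord0 nm0.
rewrite pertPS (extE _ k_lt) opprD addrA subrr add0r nmN //.
apply: le_trans (nm_sum nrm_k _ _ _) _; apply: ler_sum => j _.
have j_lt : (j < n)%N by rewrite (ltn_trans _ k_lt).
rewrite nmZ // normc_sign mul1r ext_restr //.
exact: opnorm_le (nrm_norm _ j_lt) nrm_k _ _.
Qed.

Lemma cvg_Lin_pert x :
  normx (subs (iter t Lin x) (iter t Nom (pert x))) @[t --> \oo] --> 0.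
Proof.
pose c (i : 'I_n) (j : 'I_i) :=
  opnorm R (d j) (d i) (nrm j) (nrm i) (Dm i j) * nrm j (ext (pert x) j).
apply: (cvg0_le (v := fun t => \sum_(i < n) \sum_(j < i) c i j * rho j ^+ t)).
  move=> t; rewrite (normx_ge0 nrm_norm) /=; apply: ler_sum => i _.
  rewrite -pert_iter_Lin; apply: le_trans (nrm_sub_pert_le _ _) _.
  apply: ler_sum => j _; have j_lt : (j < n)%N by rewrite (ltn_trans _ (ltn_ord i)).
  rewrite /c -mulrA; apply: ler_wpM2l.
    exact: (opnorm_ge0 (nrm_norm _ j_lt) (nrm_norm _ (ltn_ord i)) _ (d_gt0 _ j_lt)).
  rewrite pert_iter_Lin (extE _ j_lt) (extE (pert x) j_lt) mulrC.
  exact: (nrm_iter_Nom _ _ (Ordinal j_lt)).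
apply: cvg0_sum => i; apply: cvg0_sum => j; apply: cvg0_scale; apply: cvg_expr.
have j_lt : (j.+1 < n)%N by rewrite (leq_ltn_trans (ltn_ord j) (ltn_ord i)).
by rewrite ger0_norm ?rho_lt1 // rho_ge0 // ltnW.
Qed.

Lemma cluster_iter_Nom p (s : nat -> nat) :
  exists2 psi, increasing_seq psi &
    exists q, normx (subs (iter (s (psi k)) Nom p) q) @[k --> \oo] --> 0.
Proof.
have bounded (i : 'I_n) : exists B, forall k, l1norm (iter (s k) Nom p i) <= B.
  have nrm_i := nrm_norm _ (ltn_ord i).
  have [c c_gt0 c_le] := l1norm_le_nm nrm_i.
  exists (nrm i (p i) / c) => k; rewrite ler_pdivlMr // mulrC (le_trans (c_le _)) //.
  apply: le_trans (nrm_iter_Nom _ _ _) _; rewrite ler_piMl ?nm_ge0 //.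
  by rewrite exprn_ile1 ?rho_ge0 ?rho_le1.
have [psi psi_incr [q q_lim]] := bolzano_weierstrass_cV bounded.
exists psi => //; exists q.
by apply: cvg0_sum => i; apply: (nm_cvg0 (nrm_norm _ (ltn_ord i))); exact: q_lim.
Qed.

End Cascade.

Theorem theorem3 (R : realType) (n : nat) (d : nat -> nat)
  (nrm : forall i : nat, 'cV[R[i]]_(d i) -> R)
  (L : forall i : nat, 'M[R[i]]_(d i))
  (Cc : forall k : nat, 'M[R[i]]_(d k.+1, d k))
  (V : forall i : nat, 'M[R[i]]_(d i))
  (lam : forall i : nat, 'I_(d i) -> R[i])
  (N1 : 'cV[R[i]]_(d 0%N) -> 'cV[R[i]]_(d 0%N))
  (N : forall k : nat, 'cV[R[i]]_(d k) -> 'cV[R[i]]_(d k.+1) -> 'cV[R[i]]_(d k.+1))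
  (tau tauinv : state R n d -> state R n d) :
  (0 < n)%N ->
  (forall i : nat, (i < n)%N -> (0 < d i)%N) ->
  (forall i : nat, (i < n)%N -> is_norm R (d i) (nrm i)) ->
  (* (i) invertible and diagonalizable: L_i V_i = V_i Lambda_i *)
  (forall i : nat, (i < n)%N -> L i \in unitmx) ->
  (forall i : nat, (i < n)%N -> V i \in unitmx) ->
  (forall i : nat, (i < n)%N ->
     L i *m V i = V i *m diag_mx (\row_k lam i k)) ->
  (* (ii) disjoint spectra *)
  (forall i j : nat, (i < n)%N -> (j < n)%N -> i <> j ->
     forall a : R[i], ~ (eigenvalue (L i) a /\ eigenvalue (L j) a)) ->
  (* (iii) ||L_1|| < ... < ||L_n|| <= 1 *)
  (forall k : nat, (k.+1 < n)%N ->
     opnorm R (d k) (d k) (nrm k) (nrm k) (L k)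
       < opnorm R (d k.+1) (d k.+1) (nrm k.+1) (nrm k.+1) (L k.+1)) ->
  opnorm R (d n.-1) (d n.-1) (nrm n.-1) (nrm n.-1) (L n.-1) <= 1 ->
  (* tau is a homeomorphism with inverse tauinv *)
  cancel tau tauinv -> cancel tauinv tau ->
  scontinuous R n d nrm tau -> scontinuous R n d nrm tauinv ->
  (* Lin = tau^-1 o NonLin o tau *)
  (forall x : state R n d, Lin R n d L Cc x = tauinv (NonLin R n d L Cc N1 N (tau x))) ->
  forall y : state R n d,
    (fun t : nat =>
       normx R n d nrm
         (subs R n d
            (iter t (NonLin R n d L Cc N1 N) y)
            (iter t (fun z => tau (Nom R n d L (tauinv z)))
               (tau (pert R n d L Cc V lam (tauinv y)))))) @ \oo --> (0 : R).
Proof.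
move=> _ d_gt0 nrm_norm L_unit V_unit LV spectra rho_incr rho_last tauK tauinvK tau_cont _
  conj y.
set x := tauinv y.
have NonLin_iter t : iter t (NonLin R n d L Cc N1 N) y = tau (iter t (Lin R n d L Cc) x).
  elim: t => [|t IHt] /=; first by rewrite /x tauinvK.
  by rewrite IHt conj tauinvK.
have Nom_iter t : iter t (fun z => tau (Nom R n d L (tauinv z))) (tau (pert R n d L Cc V lam x))
    = tau (iter t (Nom R n d L) (pert R n d L Cc V lam x)).
  by elim: t => //= t ->; rewrite tauK.
under eq_cvg do rewrite NonLin_iter Nom_iter.
apply: cvg_subsubseq => phi phi_incr.
have [psi psi_incr [q Nom_q]] :=
  cluster_iter_Nom d_gt0 nrm_norm rho_incr rho_last (pert R n d L Cc V lam x) phi.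
exists psi => //.
have Lin_q : normx R n d nrm (subs R n d (iter (phi (psi k)) (Lin R n d L Cc) x) q)
    @[k --> \oo] --> 0.
  have Lin_Nom := cvg_subseq (increasing_seq_comp phi_incr psi_incr)
    (cvg_Lin_pert (Cc := Cc) L_unit V_unit LV spectra d_gt0 nrm_norm rho_incr rho_last x).
  exact: (normx_subs_cvg0_trans
    (b := fun k => iter (phi (psi k)) (Nom R n d L) (pert R n d L Cc V lam x))
    nrm_norm Lin_Nom Nom_q).
apply: (normx_subs_cvg0_trans (b := fun=> tau q) nrm_norm
  (scontinuous_cvg nrm_norm tau_cont Lin_q)).
under eq_cvg do rewrite (normx_subsC nrm_norm).
by have := scontinuous_cvg nrm_norm tau_cont Nom_q; apply.
Qed.
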